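(* Let $n$ be an odd multiple of $3$. Then it is possible to place $n-2$ queens on $\mathbb{Z}_n^2$ without conflict.
   Context: Queens are placed on distinct fields of the torus board $\mathbb{Z}_n^2$. Two queens at distinct fields $(x,y),(x',y')$ are in conflict iff $x=x'$, or $y=y'$, or $x+y=x'+y'$, or $x-y=x'-y'$ in $\mathbb{Z}_n$. A placement is without conflict if no two queens are in conflict. *)

From mathcomp Require Import all_boot all_algebra.
Set Implicit Arguments. Unset Strict Implicit. Unset Printing Implicit Defensive.
Import GRing.Theory.
Local Open Scope ring_scope.

(* Fields of the torus board Z_n^2.  'Z_n is Z/nZ only for n >= 2; the
   theorem below only concerns odd multiples of 3, so n >= 3. *)
Definition field (n : nat) := ('Z_n * 'Z_n)%type.

Definition conflict (n : nat) (p q : field n) : bool :=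
  [|| p.1 == q.1, p.2 == q.2, p.1 + p.2 == q.1 + q.2 | p.1 - p.2 == q.1 - q.2].

Definition without_conflict (n : nat) (S : {set field n}) : Prop :=
  forall p q, p \in S -> q \in S -> p != q -> ~~ conflict p q.

From mathcomp Require Import all_boot all_algebra zify.
Import GRing.Theory.

Set Implicit Arguments.
Unset Strict Implicit.
Unset Printing Implicit Defensive.

(* For n = 6k+3, put the queen of column x on row 2x + s(x), where the shift
   s is 0, 1, 2, 1 on the column blocks [0, 2k], [2k+1, 3k-1], [3k, 5k] and
   [5k+1, 6k+2], and leave columns 5k+1 and 6k+2 empty.  Rows, sums and
   differences of the queens then correspond to 2x + s(x), 3x + s(x) and
   x + s(x).  These are all below 3n, so equality modulo n leaves only a
   bounded number of cases, each excluded by linear arithmetic on the blocks. *)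

Section GraphPlacement.

Variables (n : nat) (D : {set 'Z_n}) (g : 'Z_n -> 'Z_n).

Definition graph_placement : {set field n} := [set (x, g x) | x : 'Z_n in D].

Lemma card_graph_placement : #|graph_placement| = #|D|.
Proof. by rewrite card_imset // => x y [->]. Qed.

Lemma graph_placement_without_conflict :
    {in D &, injective g} ->
    {in D &, injective (fun x => x + g x)%R} ->
    {in D &, injective (fun x => g x - x)%R} ->
  without_conflict graph_placement.
Proof.
move=> g_inj sum_inj diff_inj _ _ /imsetP[x Dx ->] /imsetP[y Dy ->] neq_xy.
have {}neq_xy : x != y by apply: contraNneq neq_xy => ->.
have /= sum_eq := inj_in_eq sum_inj Dx Dy.
have /= diff_eq := inj_in_eq diff_inj Dx Dy.
rewrite /conflict /= -[(x - _ == _)%R]eqr_opp !opprB.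
by rewrite (inj_in_eq g_inj) // sum_eq diff_eq (negbTE neq_xy).
Qed.

End GraphPlacement.

Lemma eqn_mod_lt3 N a b : a < 3 * N -> b < 3 * N -> a = b %[mod N] ->
  a = b \/ a = b + N \/ b = a + N \/ a = b + 2 * N \/ b = a + 2 * N.
Proof.
move=> a_lt b_lt eq_ab; have N_gt0 : 0 < N by lia.
have : a %/ N < 3 by rewrite ltn_divLR // mulnC.
have : b %/ N < 3 by rewrite ltn_divLR // mulnC.
move: (divn_eq a N) (divn_eq b N); rewrite eq_ab.
by case: (a %/ N) => [|[|[|?]]]; case: (b %/ N) => [|[|[|?]]] //; lia.
Qed.

Section OddMultipleOfThree.

Variable k : nat.
Local Notation n := (6 * k).+3.

Definition shift x :=
  if x <= 2 * k then 0 else if x < 3 * k then 1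
  else if x <= 5 * k then 2 else 1.

Definition occupied x := [&& x < n, x != 5 * k + 1 & x != 6 * k + 2].

Lemma shift_cases x :
  x <= 2 * k /\ shift x = 0 \/ 2 * k < x < 3 * k /\ shift x = 1 \/
  3 * k <= x <= 5 * k /\ shift x = 2 \/ 5 * k < x /\ shift x = 1.
Proof. by rewrite /shift; do 3?case: ifP => ?; lia. Qed.

Lemma shift_le2 x : shift x <= 2.
Proof. by rewrite /shift; do 3?case: ifP. Qed.

Lemma eqmod_double_shift :
  {in occupied &, forall x y,
    2 * x + shift x = 2 * y + shift y %[mod n] -> x = y}.
Proof.
move=> x y /and3P[x_lt ? ?] /and3P[y_lt ? ?] /eqn_mod_lt3.
have := shift_le2 x; have := shift_le2 y.
have := shift_cases x; have := shift_cases y; lia.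
Qed.

Lemma eqmod_triple_shift :
  {in occupied &, forall x y,
    3 * x + shift x = 3 * y + shift y %[mod n] -> x = y}.
Proof.
move=> x y /and3P[x_lt ? ?] /and3P[y_lt ? ?] /eqn_mod_lt3.
have := shift_le2 x; have := shift_le2 y.
have := shift_cases x; have := shift_cases y; lia.
Qed.

Lemma add_shift_lt x : occupied x -> x + shift x < n.
Proof. by case/and3P=> *; have := shift_cases x; lia. Qed.

Lemma add_shift_inj : {in occupied &, injective (fun x => x + shift x)}.
Proof.
move=> x y /and3P[? ? ?] /and3P[? ? ?] /=.
have := shift_cases x; have := shift_cases y; lia.
Qed.

Definition occupied_columns : {set 'Z_n} := [set x : 'Z_n | occupied x].

Lemma card_occupied_columns : #|occupied_columns| = n - 2.
Proof.
have -> : occupied_columns = ~: [set inord (5 * k + 1); inord (6 * k + 2)].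
  apply/setP=> x; rewrite !inE /occupied ltn_ord -!(inj_eq val_inj) /=.
  by rewrite !inordK ?negb_or // /Zp_trunc; lia.
rewrite cardsCs setCK cards2 card_ord -(inj_eq val_inj) /=.
by rewrite !inordK /Zp_trunc //; lia.
Qed.

Definition queen_row (x : 'Z_n) : 'Z_n := inZp (2 * x + shift x).

Lemma queen_row_inj : {in occupied_columns &, injective queen_row}.
Proof.
move=> x y; rewrite !inE => cx cy /(congr1 val) /= eq_mod.
exact/val_inj/eqmod_double_shift.
Qed.

Lemma add_queen_row_inj :
  {in occupied_columns &, injective (fun x => x + queen_row x)%R}.
Proof.
have tripleE z : z + (2 * z + shift z) = 3 * z + shift z by lia.
move=> x y; rewrite !inE => cx cy /(congr1 val) /=.
rewrite !modnDmr !tripleE => eq_mod.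
exact/val_inj/eqmod_triple_shift.
Qed.

Lemma queen_row_subE x : (queen_row x - x)%R = inZp (x + shift x).
Proof.
apply/eqP; rewrite subr_eq; apply/eqP/val_inj => /=.
by rewrite modnDml; congr (_ %% _); lia.
Qed.

Lemma queen_row_sub_inj :
  {in occupied_columns &, injective (fun x => queen_row x - x)%R}.
Proof.
move=> x y; rewrite !inE !queen_row_subE => cx cy /(congr1 val) /=.
by rewrite !modn_small ?add_shift_lt // => /(add_shift_inj cx cy)/val_inj.
Qed.

End OddMultipleOfThree.

Theorem lemma3 (n : nat) (hodd : odd n) (h3 : (3 %| n)%N) :
  exists S : {set field n}, #|S| = (n - 2)%N /\ without_conflict S.
Proof.
have [k ->] : exists k, n = (6 * k).+3.
  case/dvdnP: h3 hodd => q ->; rewrite oddM andbT => odd_q.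
  by exists q./2; rewrite -[q in LHS]odd_double_half odd_q; lia.
exists (graph_placement (occupied_columns k) (@queen_row k)); split.
  by rewrite card_graph_placement card_occupied_columns.
exact: graph_placement_without_conflict
  (@queen_row_inj k) (@add_queen_row_inj k) (@queen_row_sub_inj k).
Qed.
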